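(* Let $I=[r,s]$ be an interval of rounds with $s\ge r$ and let $C$ be an $I$-vertex-stable strongly connected component with $|C|\ge 2$. If $s\ge r+|C|-2$, then $D(C)\le |C|-1$.
   Context: A finite set $\Pi$ of $n\ge2$ processes is given together with an infinite sequence of simple directed graphs $\mathcal{G}^1,\mathcal{G}^2,\dots$ on vertex set $\Pi$ ($\mathcal{G}^t$ is the round-$t$ communication graph). Process $p$ causally influences $q$ in round $t$ if $q=p$ or $(p\to q)\in\mathcal{G}^t$. A causal chain of length $k\ge1$ from $p$ in round $t$ to $q$ is a sequence $p=p_0,\dots,p_k=q$ with $p_i$ causally influencing $p_{i+1}$ in round $t+i$ for $0\le i<k$; the causal distance $d_t(p,q)$ is the minimum length of such a chain ($\infty$ if none). For an interval $I=[r,s]$, a set $C\subseteq\Pi$ is an $I$-vertex-stable strongly connected component if for every $p\in C$ and every round $t\in I$, the vertex set of the strongly connected component of $\mathcal{G}^t$ containing $p$ equals $C$ (the edges may change). Its round-$x$ causal diameter is $D^x(C)=\max_{p,q\in C} d_x(p,q)$, and its causal diameter is $D(C)=\max\{D^x(C): x\in[r,s],\ x+D^x(C)-1\le s\}$ if this set is nonempty, and $D(C)=\infty$ otherwise. *)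

From mathcomp Require Import all_boot.
From Stdlib Require Import ClassicalEpsilon.
Set Implicit Arguments. Unset Strict Implicit. Unset Printing Implicit Defensive.

Section Defs.
Variable Pi : finType.
(* G t = round-t communication graph (rounds are numbered from 1). *)
Variable G : nat -> rel Pi.

Definition influences (t : nat) (p q : Pi) : bool := (p == q) || G t p q.

Fixpoint chain (t k : nat) (p q : Pi) : bool :=
  match k with
  | 0 => p == q
  | k'.+1 => [exists x, influences t p x && chain t.+1 k' x q]
  end.

(* causal distance d_t(p,q): minimal length k >= 1 of a causal chain;
   None encodes infinity *)
Definition causal_dist (t : nat) (p q : Pi) : option nat :=
  match excluded_middle_informative
          (exists k, (fun k => (0 < k) && chain t k p q) k) with
  | left H => Some (ex_minn H)
  | right _ => None
  end.

Definition omax (a b : option nat) : option nat :=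
  match a, b with
  | Some x, Some y => Some (maxn x y)
  | _, _ => None
  end.

Definition scc (t : nat) (p : Pi) : {set Pi} :=
  [set q | connect (G t) p q && connect (G t) q p].

Definition vertex_stable_scc (r s : nat) (C : {set Pi}) : Prop :=
  forall p, p \in C -> forall t, r <= t <= s -> scc t p = C.

Definition causal_diam_at (x : nat) (C : {set Pi}) : option nat :=
  \big[omax/Some 0]_(p in C) \big[omax/Some 0]_(q in C) causal_dist x p q.

Definition admissible (s x : nat) (C : {set Pi}) : bool :=
  match causal_diam_at x C with
  | Some k => x + k - 1 <= s
  | None => false
  end.

Definition diam_val (x : nat) (C : {set Pi}) : nat :=
  if causal_diam_at x C is Some k then k else 0.

(* causal diameter D(C) over I = [r,s]; None encodes infinity *)
Definition causal_diam (r s : nat) (C : {set Pi}) : option nat :=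
  let S := [seq x <- iota r (s - r + 1) | admissible s x C] in
  if S is [::] then None else Some (\max_(x <- S) diam_val x C).

End Defs.

Definition ole (a : option nat) (b : nat) : bool :=
  if a is Some k then k <= b else false.

From mathcomp Require Import all_boot zify.
From Stdlib Require Import ClassicalEpsilon.
Set Implicit Arguments. Unset Strict Implicit. Unset Printing Implicit Defensive.

(* Fix p in C and a start round t with [t, t + |C| - 2] inside [r, s], and let
   R_j be the set of members of C reached from p by a causal chain of length j.
   As long as R_j <> C, strong connectivity of C in round t + j yields an edge
   leaving R_j towards C, so R_(j+1) is strictly larger; hence R_(|C|-1) = C and
   D^t(C) <= |C| - 1.  Every admissible round x with D^x(C) >= |C| would satisfy
   x + |C| - 2 <= s, so the bound covers all of them and D(C) <= |C| - 1. *)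

Lemma connect_exit (T : finType) (e : rel T) (A : {pred T}) a b :
  a \in A -> b \notin A -> connect e a b ->
  exists c d, [/\ c \in A, d \notin A, e c d, connect e a d & connect e d b].
Proof.
move=> aA bA /connectP[l]; elim: l a aA => [|d l IH] a aA /=.
  by move=> _ eb; rewrite eb aA in bA.
case/andP=> ad dl eb; case: (boolP (d \in A)) => [dA | dA].
  have [c [d' [cA d'A cd' dd' d'b]]] := IH d dA dl eb.
  by exists c, d'; split=> //; apply: connect_trans (connect1 ad) dd'.
by exists a, d; split=> //; [apply: connect1 | apply/connectP; exists l].
Qed.

Lemma ole_omax (a b : option nat) n : ole (omax a b) n = ole a n && ole b n.
Proof. by case: a b => [x|] [y|] //=; rewrite ?geq_max ?andbF. Qed.

Lemma ole_big_omax (I : Type) (rI : seq I) (P : pred I) F n :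
  (forall i, P i -> ole (F i) n) -> ole (\big[omax/Some 0]_(i <- rI | P i) F i) n.
Proof.
by move=> HF; apply: (big_ind (fun o => ole o n)) => // a b ha hb; rewrite ole_omax ha.
Qed.

Section CausalChains.
Variables (Pi : finType) (G : nat -> rel Pi).

Lemma chain_refl t k p : chain G t k p p.
Proof.
elim: k t => [|k IH] t //=.
by apply/existsP; exists p; rewrite /influences eqxx IH.
Qed.

Lemma chain_rcons t k p x q :
  chain G t k p x -> influences G (t + k) x q -> chain G t k.+1 p q.
Proof.
elim: k t p => [|k IH] t p /=.
  by move=> /eqP-> xq; apply/existsP; exists q; rewrite -(addn0 t) xq eqxx.
case/existsP=> y /andP[py yx] xq; apply/existsP; exists y; rewrite py /=.
by apply: IH yx _; rewrite addSnnS.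
Qed.

Lemma chainS t k p q : chain G t k p q -> chain G t k.+1 p q.
Proof. by move/chain_rcons; apply; rewrite /influences eqxx. Qed.

Lemma causal_dist_le t k p q :
  0 < k -> chain G t k p q -> ole (causal_dist G t p q) k.
Proof.
move=> k_gt0 pq; rewrite /causal_dist; case: excluded_middle_informative => [H|[]].
  by case: ex_minnP => m _; apply; rewrite k_gt0.
by exists k; rewrite k_gt0.
Qed.

Section StableComponent.
Variables (r s : nat) (C : {set Pi}).
Hypothesis stableC : vertex_stable_scc G r s C.

Lemma stable_scc_exit u p (A : {set Pi}) b :
  r <= u <= s -> p \in C -> p \in A -> b \in C -> b \notin A ->
  exists c d, [/\ c \in A, d \in C, d \notin A & G u c d].
Proof.
move=> u_rs pC pA bC bA; have sccC := stableC pC u_rs.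
move: (bC); rewrite -{1}sccC inE => /andP[pb bp].
have [c [d [cA dA cd pd db]]] := connect_exit pA bA pb.
by exists c, d; rewrite -sccC inE pd (connect_trans db bp).
Qed.

Definition reach t p j := [set q in C | chain G t j p q].

Lemma reach_self t p j : p \in C -> p \in reach t p j.
Proof. by move=> pC; rewrite inE pC chain_refl. Qed.

Lemma reach_subS t p j : reach t p j \subset reach t p j.+1.
Proof. by apply/subsetP=> q; rewrite !inE => /andP[-> /chainS]. Qed.

Lemma reach_proper t p j :
  p \in C -> r <= t + j <= s -> ~~ (C \subset reach t p j) ->
  reach t p j \proper reach t p j.+1.
Proof.
move=> pC tj_rs /subsetPn[b bC bR].
have [c [d [cR dC dR cd]]] := stable_scc_exit tj_rs pC (reach_self t j pC) bC bR.
apply/properP; split; [exact: reach_subS | exists d => //].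
move: cR; rewrite !inE dC => /andP[_ pc]; apply: chain_rcons pc _.
by rewrite /influences cd orbT.
Qed.

Lemma card_reach t p j :
  p \in C -> r <= t -> t + j <= s.+1 -> minn j.+1 #|C| <= #|reach t p j|.
Proof.
move=> pC rt; elim: j => [|j IH] tj.
  by rewrite geq_min card_gt0; apply/orP; left; apply/set0Pn; exists p; exact: reach_self.
have IHj : minn j.+1 #|C| <= #|reach t p j| by apply: IH; lia.
case: (boolP (C \subset reach t p j)) => [CR | CR].
  by rewrite geq_min; apply/orP; right; apply/subset_leq_card/(subset_trans CR)/reach_subS.
have tj_rs : r <= t + j <= s by apply/andP; split; lia.
have := proper_card (reach_proper pC tj_rs CR); lia.
Qed.

Lemma reach_full t p :
  p \in C -> r <= t -> t + #|C| - 2 <= s -> reach t p #|C|.-1 = C.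
Proof.
move=> pC rt ts; have C_gt0 : 0 < #|C| by apply/card_gt0P; exists p.
apply/eqP; rewrite eqEcard; apply/andP; split.
  by apply/subsetP=> q; rewrite inE => /andP[].
have : minn #|C|.-1.+1 #|C| <= #|reach t p #|C|.-1| by apply: card_reach => //; lia.
by rewrite prednK // minnn.
Qed.

Lemma causal_diam_at_le t :
  2 <= #|C| -> r <= t -> t + #|C| - 2 <= s -> ole (causal_diam_at G t C) (#|C| - 1).
Proof.
move=> C_ge2 rt ts; apply: ole_big_omax => p pC; apply: ole_big_omax => q qC.
have : q \in reach t p #|C|.-1 by rewrite reach_full.
by rewrite inE subn1 => /andP[_]; apply: causal_dist_le; lia.
Qed.

Lemma admissible_diam_val_le x :
  2 <= #|C| -> r <= x -> admissible G s x C -> diam_val G x C <= #|C| - 1.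
Proof.
move=> C_ge2 rx; rewrite /admissible /diam_val.
case Dx: causal_diam_at => [k|] // xk; case: (leqP k (#|C| - 1)) => // Ck.
have := causal_diam_at_le C_ge2 rx; rewrite Dx => /= bound.
suff : k <= #|C| - 1 by lia.
by apply: bound; lia.
Qed.

End StableComponent.
End CausalChains.

Theorem lemma2 (Pi : finType) (G : nat -> rel Pi)
  (HPi : 2 <= #|Pi|) (Hsimple : forall t, irreflexive (G t))
  (r s : nat) (Hr : 1 <= r) (Hrs : r <= s) (C : {set Pi})
  (HC : vertex_stable_scc G r s C) (HC2 : 2 <= #|C|)
  (Hlen : r + #|C| - 2 <= s) :
  ole (causal_diam G r s C) (#|C| - 1).
Proof.
rewrite /causal_diam; set S := filter _ _.
have r_adm : r \in S.
  rewrite mem_filter mem_iota leqnn /admissible.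
  move: (causal_diam_at_le HC HC2 (leqnn r) Hlen).
  by case: causal_diam_at => [k|] //= Ck; apply/andP; split; lia.
have diam_le : forall x : nat, x \in S -> diam_val G x C <= #|C| - 1.
  move=> x; rewrite mem_filter mem_iota => /andP[adm /andP[rx _]].
  by apply: (admissible_diam_val_le HC HC2 rx).
by case: S r_adm diam_le => // x S' _ /= diam_le; apply/bigmax_leqP_seq => y /diam_le.
Qed.
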